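(* Over a $4$-letter alphabet there is no complete bifurcate tree; more precisely, there is no complete bifurcate tree over a $4$-letter alphabet containing words of length more than $6$ (and since every complete bifurcate tree contains arbitrarily long words, none exists at all).
   Context: A square is a nonempty word of the form $XX$; a word is square-free if it has no (contiguous) factor that is a square. For a word $W$ of length $n$ and $0\le i\le n$, let $P_i(W)$, $S_i(W)$ be the prefix and suffix of $W$ of length $i$; an extension of $W$ at position $i$ over alphabet $\mathcal{A}$ is a word $P_i(W)\mathtt{x}S_{n-i}(W)$ with $\mathtt{x}\in\mathcal{A}$. A square-free word of length $n$ is bifurcate over $\mathcal{A}$ if for each position $i\in\{0,\dots,n\}$ it has a square-free extension at position $i$. A bifurcate tree over $\mathcal{A}$ is a family of bifurcate words over $\mathcal{A}$ arranged as a rooted tree in which the children of a word $W$ are single-letter extensions of $W$ at pairwise different positions. It is complete if every word of length $n$ in it has exactly $n+1$ children (one extension at each position $0,\dots,n$). *)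

From Stdlib Require Import Relations.
From mathcomp Require Import all_boot.
Set Implicit Arguments. Unset Strict Implicit. Unset Printing Implicit Defensive.

Section Words.
Variable A : eqType.

Definition has_square (w : seq A) : Prop :=
  exists (u x v : seq A), x <> [::] /\ w = u ++ x ++ x ++ v.

Definition square_free (w : seq A) : Prop := ~ has_square w.

Definition extension (w : seq A) (i : nat) (a : A) : seq A :=
  take i w ++ a :: drop i w.

(* bifurcate over the alphabet A (the whole type A is the alphabet) *)
Definition bifurcate (w : seq A) : Prop :=
  square_free w /\
  forall i, i <= size w -> exists a : A, square_free (extension w i a).

(* A bifurcate tree: nodes of type V, root [root], word labels [lab],
   child relation [child u v] ("v is a child of u"), and [pos v] the
   position at which the child v extends its parent. *)
Definition bifurcate_tree (V : Type) (root : V) (lab : V -> seq A)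
    (child : V -> V -> Prop) (pos : V -> nat) : Prop :=
  (
      (forall v, ~ child v root) /\
      (forall u1 u2 v, child u1 v -> child u2 v -> u1 = u2) /\
      (forall v, clos_refl_trans V child root v)) /\
      (forall v, bifurcate (lab v)) /\
      (forall u v, child u v ->
         pos v <= size (lab u) /\ exists a : A, lab v = extension (lab u) (pos v) a) /\
      (forall u v1 v2, child u v1 -> child u v2 -> pos v1 = pos v2 -> v1 = v2).

(* complete: each word of length n has an extension child at each position
   0..n; together with the above, exactly n+1 children. *)
Definition complete_bifurcate_tree (V : Type) (root : V) (lab : V -> seq A)
    (child : V -> V -> Prop) (pos : V -> nat) : Prop :=
  bifurcate_tree root lab child pos /\
  forall u i, i <= size (lab u) -> exists v, child u v /\ pos v = i.

End Words.

From mathcomp Require Import all_boot zify.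
Set Implicit Arguments. Unset Strict Implicit. Unset Printing Implicit Defensive.

(* Every word of a complete bifurcate tree is the root of complete bifurcate
   subtrees of every finite depth d: it can be extended at every position, then
   each extension again at every position, d times, staying square-free.  This
   property descends to factors, in particular to the empty word.  An exhaustive
   search shows that over four letters the empty word cannot be extended in this
   way seven times. *)

Definition has_squareb (T : eqType) (w : seq T) : bool :=
  has (fun s => has (fun l => (s + l.*2 <= size w) &&
        (take l (drop s w) == take l (drop (s + l) w))) (iota 1 (size w)))
    (iota 0 (size w)).

Lemma has_squarebP (T : eqType) (w : seq T) :
  reflect (has_square w) (has_squareb w).
Proof.
apply: (iffP idP) => [|[u [x [v [x_nz ->]]]]].
  case/hasP => s _ /hasP [l]; rewrite mem_iota => /andP [l_gt0 _].
  case/andP => sl_le /eqP eq_halves.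
  exists (take s w), (take l (drop s w)), (drop l (drop (s + l) w)); split.
    by apply/eqP; rewrite -size_eq0 size_takel ?size_drop; lia.
  by rewrite {2}eq_halves !cat_take_drop addnC -drop_drop !cat_take_drop.
have l_gt0 : 0 < size x by rewrite lt0n size_eq0; apply/eqP.
apply/hasP; exists (size u); first by rewrite mem_iota !size_cat; lia.
apply/hasP; exists (size x); first by rewrite mem_iota !size_cat; lia.
rewrite !size_cat -addnn leq_add2l !addnA leq_addr /=.
by rewrite addnC -drop_drop !drop_size_cat // !take_size_cat.
Qed.

Lemma has_squareb_map (T S : eqType) (f : T -> S) (w : seq T) :
  injective f -> has_squareb (map f w) = has_squareb w.
Proof.
move=> f_inj; rewrite /has_squareb size_map.
apply: eq_has => s; apply: eq_has => l.
by rewrite -!map_drop -!map_take (inj_eq (inj_map f_inj)).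
Qed.

Lemma square_free_infix (T : eqType) (u w : seq T) :
  infix u w -> square_free w -> square_free u.
Proof.
case/infixP=> [x [y ->]] sqf_w [p [z [q [z_nz def_u]]]]; apply: sqf_w.
by exists (x ++ p), z, (q ++ y); split; rewrite // def_u !catA.
Qed.

Lemma extension_size_cat (T : eqType) (p q : seq T) (a : T) :
  extension (p ++ q) (size p) a = p ++ a :: q.
Proof. by rewrite /extension take_size_cat // drop_size_cat. Qed.

Lemma map_extension (T S : eqType) (f : T -> S) (w : seq T) i a :
  map f (extension w i a) = extension (map f w) i (f a).
Proof. by rewrite /extension map_cat /= map_take map_drop. Qed.

Section BifurcateTo.
Variable T : eqType.

Fixpoint bifurcate_to (d : nat) (w : seq T) : Prop :=
  square_free w /\
  if d is d'.+1 then forall i, i <= size w -> exists a, bifurcate_to d' (extension w i a)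
  else True.

Lemma bifurcate_to_infix d (u w : seq T) :
  infix u w -> bifurcate_to d w -> bifurcate_to d u.
Proof.
elim: d u w => [|d IHd] u w u_w [sqf_w ext_w];
  split => //; try exact: square_free_infix sqf_w.
move=> j le_j_u; case/infixP: u_w => [x [y def_w]].
have [a bif_a] : exists a, bifurcate_to d (extension w (size x + j) a).
  by apply: ext_w; rewrite def_w !size_cat; lia.
exists a; apply: IHd bif_a; apply/infixP; exists x, y.
have -> : size x + j = size (x ++ take j u) by rewrite size_cat size_takel.
rewrite def_w -{1}(cat_take_drop j u) -catA (catA x) extension_size_cat.
by rewrite /extension -!catA.
Qed.

End BifurcateTo.

Section CompleteTree.
Variables (A : eqType) (V : Type) (root : V) (lab : V -> seq A).
Variables (child : V -> V -> Prop) (pos : V -> nat).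
Hypothesis tree : complete_bifurcate_tree root lab child pos.

Lemma complete_tree_bifurcate_to d v : bifurcate_to d (lab v).
Proof.
have [[_ [bif_lab [child_ext _]]] complete] := tree.
elim: d v => [|d IHd] v; split => //; try exact: (bif_lab v).1.
move=> i le_i_v; have [u [v_u pos_u]] := complete v i le_i_v.
have [_ [a lab_u]] := child_ext v u v_u.
by exists a; rewrite -pos_u -lab_u.
Qed.

End CompleteTree.

(* [bifurcate_to] over the alphabet [0, k), for computation.  The square test
   comes first so that the search tree is pruned under lazy evaluation. *)
Fixpoint bifurcate_tob (k d : nat) (w : seq nat) : bool :=
  ~~ has_squareb w &&
  if d is d'.+1 then
    all (fun i => has (fun a => bifurcate_tob k d' (extension w i a)) (iota 0 k))
      (iota 0 (size w).+1)
  else true.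

Lemma bifurcate_to_map (T : eqType) k (f : T -> nat) :
  injective f -> (forall a, f a < k) ->
  forall d w, bifurcate_to d w -> bifurcate_tob k d (map f w).
Proof.
move=> f_inj f_lt; elim=> [|d IHd] w [sqf_w ext_w]; cbn [bifurcate_tob];
  rewrite has_squareb_map //; apply/andP; split => //; try exact/has_squarebP.
apply/allP => i; rewrite mem_iota size_map ltnS => le_i_w.
have [a bif_a] := ext_w i le_i_w.
by apply/hasP; exists (f a); rewrite ?mem_iota ?f_lt // -map_extension IHd.
Qed.

Lemma bifurcate_tob_4_7_nil : bifurcate_tob 4 7 [::] = false.
Proof. by []. Qed.

Theorem no_complete_bifurcate_tree (A : finType) (V : Type) (root : V)
    (lab : V -> seq A) (child : V -> V -> Prop) (pos : V -> nat) :
  #|A| <= 4 -> ~ complete_bifurcate_tree root lab child pos.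
Proof.
move=> card_A tree.
have bif_nil : bifurcate_to 7 ([::] : seq A).
  exact: bifurcate_to_infix (infix0s _) (complete_tree_bifurcate_to tree 7 root).
pose f (a : A) : nat := enum_rank a.
have f_inj : injective f by move=> a b /val_inj /enum_rank_inj.
have f_lt a : f a < 4 by exact: leq_trans (ltn_ord _) card_A.
by have := bifurcate_to_map f_inj f_lt bif_nil; rewrite bifurcate_tob_4_7_nil.
Qed.

Theorem mainTheorem7 (A : finType) (hA : #|A| = 4) :
  (forall (V : Type) (root : V) (lab : V -> seq A) (child : V -> V -> Prop)
          (pos : V -> nat),
     complete_bifurcate_tree root lab child pos -> forall v, size (lab v) <= 6)
  /\
  (forall (V : Type) (root : V) (lab : V -> seq A) (child : V -> V -> Prop)
          (pos : V -> nat),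
     ~ complete_bifurcate_tree root lab child pos).
Proof.
have card_A : #|A| <= 4 by rewrite hA.
split=> V root lab child pos; last exact: no_complete_bifurcate_tree.
by move=> tree; case: (no_complete_bifurcate_tree card_A tree).
Qed.
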